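(* For every $k\in\mathbb{N}$ and all words $A,B\in\mathsf{W}_\omega$ with $A\sim B$, we have $Ak\sim Bk$.
   Context: Words are finite strings over $\mathbb{N}$; $\mathsf{W}_\omega$ is the set of all words, $\Lambda$ the empty word, $Ak$ the word $A$ followed by the symbol $k$. For $k\in\mathbb{N}$, $\mathsf{S}_k$ is the set of words all of whose symbols are $\ge k$. Given a linear preorder $\precsim$ with $A\sim B$ iff $A\precsim B\wedge B\precsim A$ and $A\prec B$ iff $A\precsim B\wedge\neg B\precsim A$, a finite sequence $(A_1,\dots,A_p)$ is lexicographically not greater than $(B_1,\dots,B_q)$ iff either $p\le q$ and $A_i\sim B_i$ for all $i\le p$, or there is $s<\min(p,q)$ with $A_i\sim B_i$ for $i\le s$ and $A_{s+1}\prec B_{s+1}$. A lexicographically maximal subsequence of a finite sequence is a subsequence that is lexicographically not less than every subsequence. The linear preorder $\precsim$ on $\mathsf{W}_\omega$ is defined by recursion on (largest symbol of $AB$) $-$ (smallest symbol of $AB$): $\Lambda\precsim\Lambda$; if $AB$ is nonempty with minimal symbol $n$, write uniquely $A=A_1n\cdots nA_k$, $B=B_1n\cdots nB_l$ ($k,l\ge1$) with $A_i,B_j\in\mathsf{S}_{n+1}$ (possibly empty); let $C,D$ be lexicographically maximal subsequences of $(A_1,\dots,A_k)$, $(B_1,\dots,B_l)$; then $A\precsim B$ iff $C$ is lexicographically not greater than $D$. *)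

From mathcomp Require Import all_boot.
Set Implicit Arguments. Unset Strict Implicit. Unset Printing Implicit Defensive.

Definition word := seq nat.

Definition minsym (s : word) : nat := foldr minn (head 0 s) s.
Definition maxsym (s : word) : nat := foldr maxn 0 s.

(* [parts n A] = [:: A_1; ...; A_k] where A = A_1 n A_2 n ... n A_k,
   i.e. A is cut at every occurrence of the symbol n (k = count n A + 1). *)
Fixpoint parts (n : nat) (A : word) : seq word :=
  match A with
  | [::] => [:: [::]]
  | x :: A' => let r := parts n A' in
               if x == n then [::] :: r else (x :: head [::] r) :: behead r
  end.

(* (A_1..A_p) lexicographically not greater than (B_1..B_q) w.r.t. the
   preorder [le]; [~] is le both ways, [<] is le and not le backwards. *)
Fixpoint lexle (T : Type) (le : T -> T -> Prop) (s t : seq T) : Prop :=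
  match s, t with
  | [::], _ => True
  | _ :: _, [::] => False
  | a :: s', b :: t' =>
      (le a b /\ ~ le b a) \/ (le a b /\ le b a /\ lexle le s' t')
  end.

Definition lexmax (le : word -> word -> Prop) (C s : seq word) : Prop :=
  subseq C s /\ forall S, subseq S s -> lexle le S C.

(* Recursive definition of the preorder with fuel; the fuel bounds
   (largest symbol) - (smallest symbol), the recursion parameter. *)
Fixpoint wle_fuel (f : nat) (A B : word) : Prop :=
  match f with
  | 0 => True
  | f'.+1 =>
      if A ++ B is [::] then True else
      let n := minsym (A ++ B) in
      exists C D, lexmax (wle_fuel f') C (parts n A) /\
                  lexmax (wle_fuel f') D (parts n B) /\
                  lexle (wle_fuel f') C D
  end.

Definition wle (A B : word) : Prop :=
  wle_fuel (maxsym (A ++ B) - minsym (A ++ B)).+1 A B.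

Definition wsim (A B : word) : Prop := wle A B /\ wle B A.

From Stdlib Require Import Setoid ClassicalEpsilon.
From mathcomp Require Import all_boot zify.

Set Implicit Arguments. Unset Strict Implicit. Unset Printing Implicit Defensive.

(* If m is at most every symbol, A ≾ B compares the lexicographically maximal
   subsequences of the parts of A and B cut at m.  Once ≾ is known to be a total
   preorder (by induction on the symbol range), that maximal subsequence is the
   sequence of right-to-left maxima, so A ∼ B says these two sequences are
   termwise equivalent.  Appending k to both words either appends the empty part,
   which is ≾-minimal (k = m), or extends the last parts a ∼ b to ak ∼ bk (by
   induction).  As a ≾ ak, the new right-to-left maxima arise from the old ones by
   discarding the entries below ak, resp. bk, which are the same on both sides. *)

Lemma eq_in_lexle (T : eqType) (U : seq T) (le1 le2 : T -> T -> Prop) s t :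
  {in U &, forall x y, le1 x y <-> le2 x y} ->
  {subset s <= U} -> {subset t <= U} -> lexle le1 s t <-> lexle le2 s t.
Proof.
move=> le12; elim: s t => [|a s IHs] [|b t] //= sU tU.
have aU : a \in U by apply: sU; rewrite mem_head.
have bU : b \in U by apply: tU; rewrite mem_head.
rewrite (le12 a b aU bU) (le12 b a bU aU) IHs //.
- by move=> x xs; apply: sU; rewrite inE xs orbT.
- by move=> x xt; apply: tU; rewrite inE xt orbT.
Qed.

Section RightMaxima.
Variables (T : eqType) (R : rel T).
Local Notation lex := (lexle (fun x y : T => R x y)).

(* For a total preorder this is the lexicographically maximal subsequence. *)
Fixpoint right_maxima (s : seq T) : seq T :=
  if s is y :: s' then
    if all (R^~ y) s' then y :: right_maxima s' else right_maxima s'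
  else [::].

Lemma right_maxima_subseq s : subseq (right_maxima s) s.
Proof.
elim: s => //= y s IHs; case: ifP => _; first by rewrite /= eqxx.
exact: subseq_trans IHs (subseq_cons s y).
Qed.

Lemma mem_right_maxima s : {subset right_maxima s <= s}.
Proof. exact/mem_subseq/right_maxima_subseq. Qed.

Lemma right_maxima_rcons s x :
  right_maxima (rcons s x) = rcons (filter (R x) (right_maxima s)) x.
Proof.
elim: s => //= y s IHs; rewrite all_rcons IHs.
by case: (all _ s) => /=; case: (R x y).
Qed.

Lemma right_maxima_rcons_bot s x :
  (forall y, R x y) -> right_maxima (rcons s x) = rcons (right_maxima s) x.
Proof. by move=> xbot; rewrite right_maxima_rcons; congr rcons; apply/all_filterP/allP. Qed.

Definition lexeq := all2 (fun x y => R x y && R y x).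

Lemma lexeq_lexle s t : lexeq s t -> lex s t.
Proof.
elim: s t => [|a s IHs] [|b t] //= /andP[/andP[Rab Rba] st].
by right; split; [|split; [|apply: IHs]].
Qed.

Lemma lexeq_sym s t : lexeq s t -> lexeq t s.
Proof.
elim: s t => [|a s IHs] [|b t] //= /andP[/andP[Rab Rba] st].
by rewrite Rab Rba IHs.
Qed.

Lemma lexle_anti s t : lex s t -> lex t s -> lexeq s t.
Proof.
elim: s t => [|a s IHs] [|b t] //=.
move=> [[Rab nRba]|[Rab [Rba st]]] [[Rba' nRab]|[Rba' [Rab' ts]]] //.
by rewrite Rab Rba (IHs t st ts).
Qed.

Lemma lexeq_rcons s t a b :
  lexeq (rcons s a) (rcons t b) = lexeq s t && (R a b && R b a).
Proof.
elim: s t => [|x s IHs] [|y t] /=.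
- by rewrite andbT.
- by case: t => [|z t]; rewrite /= ?andbF.
- by case: s {IHs} => [|z s]; rewrite /= ?andbF.
- by rewrite IHs andbA.
Qed.

Lemma lexeq_filter (p q : pred T) s t :
  (forall x y, R x y -> R y x -> p x = q y) ->
  lexeq s t -> lexeq (filter p s) (filter q t).
Proof.
move=> pq; elim: s t => [|x s IHs] [|y t] //= /andP[/andP[Rxy Ryx] st].
by rewrite (pq _ _ Rxy Ryx); case: (q y); rewrite /= ?Rxy ?Ryx IHs.
Qed.

Lemma lexle_seq1 a b t : lex [:: a] (b :: t) <-> R a b.
Proof.
split=> [[[]|[]] //|Rab] /=.
by case Rba: (R b a); [right | left]; rewrite ?Rba.
Qed.

Lemma lexeq_right_maxima_rcons s t a b a' b' :
  transitive R -> R a a' -> R b b' -> R a' b' -> R b' a' ->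
  lexeq (right_maxima (rcons s a)) (right_maxima (rcons t b)) ->
  lexeq (right_maxima (rcons s a')) (right_maxima (rcons t b')).
Proof.
move=> Rtr Raa' Rbb' Ra'b' Rb'a'.
rewrite !right_maxima_rcons !lexeq_rcons Ra'b' Rb'a' !andbT => /andP[st _].
have filter_R c c' u : R c c' -> filter (R c') u = filter (R c') (filter (R c) u).
  move=> Rcc'; rewrite -filter_predI; apply: eq_filter => y /=.
  by case Rc'y: (R c' y); rewrite // (Rtr _ _ _ Rcc' Rc'y).
rewrite (filter_R _ _ (right_maxima s) Raa') (filter_R _ _ (right_maxima t) Rbb').
apply: lexeq_filter st => x y Rxy Ryx.
apply/idP/idP => [Ra'x|Rb'y].
- exact: Rtr (Rtr _ _ _ Rb'a' Ra'x) Rxy.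
- exact: Rtr (Rtr _ _ _ Ra'b' Rb'y) Ryx.
Qed.

Section Preorder.
Variable D : {pred T}.
Hypothesis R_total : {in D &, total R}.
Hypothesis R_trans : {in D & &, transitive R}.

Let R_refl : {in D, reflexive R}.
Proof. by move=> x Dx; have := R_total Dx Dx; rewrite orbb. Qed.

Let subset_cons (a : T) s : {subset a :: s <= D} -> a \in D /\ {subset s <= D}.
Proof.
move=> sD; split=> [|x xs]; apply: sD; first exact: mem_head.
by rewrite inE xs orbT.
Qed.

Lemma lexle_total s t : {subset s <= D} -> {subset t <= D} -> lex s t \/ lex t s.
Proof.
elim: s t => [|a s IHs] [|b t] sD tD; [by left | by left | by right |].
have [Da {}sD] := subset_cons sD; have [Db {}tD] := subset_cons tD.
rewrite /=; case Rab: (R a b); case Rba: (R b a).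
- by case: (IHs t sD tD) => st; [left | right]; right.
- by left; left.
- by right; left.
- by move: (R_total Da Db); rewrite Rab Rba.
Qed.

Lemma lexle_trans s t u : {subset s <= D} -> {subset t <= D} -> {subset u <= D} ->
  lex s t -> lex t u -> lex s u.
Proof.
elim: s t u => [|a s IHs] [|b t] [|c u] //= sD tD uD.
have [Da {}sD] := subset_cons sD; have [Db {}tD] := subset_cons tD.
have [Dc {}uD] := subset_cons uD.
have Rac Rab Rbc : R a c := R_trans Db Da Dc Rab Rbc.
move=> [[Rab nRba]|[Rab [Rba st]]] [[Rbc nRcb]|[Rbc [Rcb tu]]].
- by left; split; [exact: Rac | move=> Rca; apply: nRba; exact: R_trans Dc Db Da Rbc Rca].
- by left; split; [exact: Rac | move=> Rca; apply: nRba; exact: R_trans Dc Db Da Rbc Rca].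
- by left; split; [exact: Rac | move=> Rca; apply: nRcb; exact: R_trans Da Dc Db Rca Rab].
- right; split; first exact: Rac.
  by split; [exact: R_trans Db Dc Da Rcb Rba | exact: IHs tu].
Qed.

Lemma lexle_catr s u : {subset s <= D} -> lex s (s ++ u).
Proof.
elim: s => [|a s IHs] //= sD; have [Da {}sD] := subset_cons sD.
by right; split; [|split]; [exact: R_refl | exact: R_refl | exact: IHs].
Qed.

Lemma right_maxima_head s : s != [::] -> {subset s <= D} ->
  exists h t, [/\ right_maxima s = h :: t, h \in s & {in s, forall y, R y h}].
Proof.
elim: s => [|y s IHs] // _ sD; have [Dy {}sD] := subset_cons sD.
rewrite /=; case: ifP => [ys|nys].
  exists y, (right_maxima s); split=> //; first exact: mem_head.
  by move=> z; rewrite inE => /predU1P[->|zs]; [exact: R_refl | exact: (allP ys)].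
have sn : s != [::] by case: s nys {IHs sD}.
have [h [t [-> hs hmax]]] := IHs sn sD.
exists h, t; split=> //; first by rewrite inE hs orbT.
move=> z; rewrite inE => /predU1P[->|]; last exact: hmax.
have /allPn [w ws nRwy] := negbT nys; have Dw := sD w ws.
have Ryw : R y w by move: (R_total Dy Dw); rewrite (negbTE nRwy) orbF.
exact: R_trans Dw Dy (sD h hs) Ryw (hmax w ws).
Qed.

Lemma lexle_right_maxima s S : {subset s <= D} -> subseq S s -> lex S (right_maxima s).
Proof.
elim: s S => [|y s IHs] S sD; first by rewrite subseq0 => /eqP->.
have [Dy {}sD] := subset_cons sD.
case: S => [|z S] //= Sys.
have Ss : subseq (if z == y then S else z :: S) s by [].
case: eqP Ss => [->|/eqP nzy] Ss.
- case: ifP => [ys|nys].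
    by right; split; [|split]; [exact: R_refl | exact: R_refl | exact: IHs S sD Ss].
  have sn : s != [::] by case: s nys {IHs sD Sys Ss}.
  have [h [t [-> hs hmax]]] := right_maxima_head sn sD.
  have /allPn [w ws nRwy] := negbT nys; have Dw := sD w ws.
  have Ryw : R y w by move: (R_total Dy Dw); rewrite (negbTE nRwy) orbF.
  left; split; first exact: R_trans Dw Dy (sD h hs) Ryw (hmax w ws).
  by move=> Rhy; move/negP: nRwy; apply; exact: R_trans (sD h hs) Dw Dy (hmax w ws) Rhy.
- case: ifP => [ys|_]; last exact: IHs _ sD Ss.
  have zs : z \in s by apply: (mem_subseq Ss); rewrite mem_head.
  have Rzy : R z y := allP ys z zs.
  case Ryz: (R y z).
  + by right; split=> //; split=> //; exact: IHs S sD (subseq_trans (subseq_cons S z) Ss).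
  + by left; split=> //; rewrite Ryz.
Qed.

Lemma lexle_rcons_filter s a a' : {subset s <= D} -> a \in D -> a' \in D -> R a a' ->
  lex (rcons (filter (R a) s) a) (rcons (filter (R a') s) a').
Proof.
move=> + Da Da' Raa'; elim: s => [|y s IHs] sD /=.
  exact/(lexle_seq1 a a' [::]).
have [Dy {}sD] := subset_cons sD.
case Ra'y: (R a' y).
  rewrite (R_trans Da' Da Dy Raa' Ra'y) /=.
  by right; split; [|split]; [exact: R_refl | exact: R_refl | exact: IHs sD].
case Ray: (R a y); last exact: IHs sD.
have [h [t [-> Ra'h Dh]]] :
    exists h t, [/\ rcons (filter (R a') s) a' = h :: t, R a' h & h \in D].
  case Es: (filter (R a') s) => [|h t].
    by exists a', [::]; split=> //; exact: R_refl.
  have : h \in filter (R a') s by rewrite Es mem_head.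
  rewrite mem_filter => /andP[Ra'h hs].
  by exists h, (rcons t a'); split=> //; exact: sD.
have Rya' : R y a' by move: (R_total Da' Dy); rewrite Ra'y.
left; split; first exact: R_trans Da' Dy Dh Rya' Ra'h.
by move=> Rhy; move: Ra'y; rewrite (R_trans Dh Da' Dy Ra'h Rhy).
Qed.

End Preorder.
End RightMaxima.

Definition lexmax_le (le : word -> word -> Prop) (s t : seq word) :=
  exists C D, lexmax le C s /\ lexmax le D t /\ lexle le C D.

Lemma eq_in_lexmax (U : seq word) (le1 le2 : word -> word -> Prop) C s :
  {in U &, forall x y, le1 x y <-> le2 x y} -> {subset s <= U} ->
  lexmax le1 C s <-> lexmax le2 C s.
Proof.
move=> le12 sU; have SU S : subseq S s -> {subset S <= U}.
  by move=> /mem_subseq Ss x /Ss; apply: sU.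
split=> -[Cs Cmax]; split=> // S Ss.
- by rewrite -(eq_in_lexle le12 (SU _ Ss) (SU _ Cs)); apply: Cmax.
- by rewrite (eq_in_lexle le12 (SU _ Ss) (SU _ Cs)); apply: Cmax.
Qed.

Lemma eq_in_lexmax_le (le1 le2 : word -> word -> Prop) s t :
  {in s ++ t &, forall x y, le1 x y <-> le2 x y} ->
  lexmax_le le1 s t <-> lexmax_le le2 s t.
Proof.
have sU : {subset s <= s ++ t} by move=> x xs; rewrite mem_cat xs.
have tU : {subset t <= s ++ t} by move=> x xt; rewrite mem_cat xt orbT.
suff lexmax_le_sub l1 l2 : {in s ++ t &, forall x y, l1 x y <-> l2 x y} ->
    lexmax_le l1 s t -> lexmax_le l2 s t.
  by move=> le12; split; apply: lexmax_le_sub => // x y xU yU; rewrite le12.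
move=> l12 [C [D [Cmax [Dmax CD]]]]; exists C, D.
have CU : {subset C <= s ++ t} by move=> x /(mem_subseq Cmax.1) /sU.
have DU : {subset D <= s ++ t} by move=> x /(mem_subseq Dmax.1) /tU.
split; first exact/(eq_in_lexmax C l12 sU).
by split; [apply/(eq_in_lexmax D l12 tU) | apply/(eq_in_lexle l12 CU DU)].
Qed.

Section LexmaxPreorder.
Variables (R : rel word) (D : {pred word}).
Hypothesis R_total : {in D &, total R}.
Hypothesis R_trans : {in D & &, transitive R}.
Local Notation lex := (lexle (fun x y : word => R x y)).

Lemma lexmax_right_maxima s : {subset s <= D} -> lexmax (fun x y => R x y) (right_maxima R s) s.
Proof.
move=> sD; split=> [|S Ss]; first exact: right_maxima_subseq.
exact: (lexle_right_maxima R_total R_trans sD Ss).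
Qed.

Lemma lexmax_leE s t : {subset s <= D} -> {subset t <= D} ->
  lexmax_le (fun x y => R x y) s t <-> lex (right_maxima R s) (right_maxima R t).
Proof.
move=> sD tD; split=> [[C [E [[Cs Cmax] [[Et Emax] CE]]]]|Mst]; last first.
  exists (right_maxima R s), (right_maxima R t).
  by split; [|split]; [exact: (lexmax_right_maxima sD) | exact: (lexmax_right_maxima tD) |].
have subD u v : subseq u v -> {subset v <= D} -> {subset u <= D}.
  by move=> /mem_subseq uv vD x /uv /vD.
have MsD := subD _ _ (right_maxima_subseq R s) sD.
have MtD := subD _ _ (right_maxima_subseq R t) tD.
have ED := subD _ _ Et tD.
apply: (lexle_trans R_trans MsD ED MtD); last exact: (lexle_right_maxima R_total R_trans tD Et).
exact: (lexle_trans R_trans MsD (subD _ _ Cs sD) ED) (Cmax _ (right_maxima_subseq R s)) CE.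
Qed.

End LexmaxPreorder.

Lemma foldr_minn_le a s x : x \in s -> foldr minn a s <= x.
Proof.
elim: s => //= y s IHs; rewrite inE => /predU1P[->|/IHs]; first exact: geq_minl.
exact: leq_trans (geq_minr _ _).
Qed.

Lemma foldr_minn_mem a s : foldr minn a s \in a :: s.
Proof.
elim: s => /= [|y s IHs]; first exact: mem_head.
rewrite /minn; case: ifP => _; first by rewrite !inE eqxx orbT.
by move: IHs; rewrite !inE => /orP[] ->; rewrite ?orbT.
Qed.

Lemma minsym_le s x : x \in s -> minsym s <= x.
Proof. exact: foldr_minn_le. Qed.

Lemma minsym_mem s : s != [::] -> minsym s \in s.
Proof.
case: s => // a s _; have := foldr_minn_mem a (a :: s).
by rewrite /minsym inE => /predU1P[->|]; rewrite ?mem_head.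
Qed.

Lemma leq_maxsym s x : x \in s -> x <= maxsym s.
Proof.
elim: s => //= y s IHs; rewrite inE => /predU1P[->|/IHs]; first exact: leq_maxl.
by move/leq_trans; apply; exact: leq_maxr.
Qed.

Lemma maxsym_le s M : {in s, forall x, x <= M} -> maxsym s <= M.
Proof.
elim: s => //= y s IHs sM; rewrite geq_max sM ?mem_head //=.
by apply: IHs => x xs; apply: sM; rewrite inE xs orbT.
Qed.

Lemma mem_parts n A x y : x \in parts n A -> y \in x -> (y \in A) && (y != n).
Proof.
elim: A x => [|z A IHA] x /=; first by rewrite inE => /eqP->.
have IH' x' : x' \in parts n A -> y \in x' -> (y \in z :: A) && (y != n).
  by move=> x'A /(IHA _ x'A) /andP[yA ->]; rewrite inE yA orbT.
case: eqP => [zn|/eqP nzn].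
  by rewrite inE => /predU1P[->//|]; exact: IH'.
have yz : y = z -> (y \in z :: A) && (y != n) by move=> ->; rewrite mem_head nzn.
case: (parts n A) IH' => [|h t] IH'; rewrite inE.
  by move=> /eqP-> /[!inE] /eqP.
case/predU1P=> [->|xt]; last by apply: IH'; rewrite inE xt orbT.
by rewrite inE => /predU1P[|yh]; [exact: yz | apply: (IH' h); rewrite ?mem_head].
Qed.

Lemma sumn_size_parts n A : sumn (map size (parts n A)) + count_mem n A = size A.
Proof.
elim: A => [|z A IHA] //=; case: (z == n) => /=.
  by rewrite -IHA add0n add1n addnS.
by case: (parts n A) IHA => [|h t] /= IHA; rewrite -IHA; lia.
Qed.

Lemma size_parts n A (x : word) : x \in parts n A -> size x + count_mem n A <= size A.
Proof.
rewrite -(sumn_size_parts n A) leq_add2r.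
elim: (parts n A) => //= y s IHs; rewrite inE => /predU1P[->|/IHs]; first exact: leq_addr.
by move/leq_trans; apply; exact: leq_addl.
Qed.

Lemma parts_id n A : n \notin A -> parts n A = [:: A].
Proof.
elim: A => [|z A IHA] //=; rewrite inE negb_or => /andP[nz nA].
by rewrite eq_sym (negbTE nz) IHA.
Qed.

Lemma parts_rcons n A k : exists P a, parts n A = rcons P a /\
  parts n (rcons A k) = if k == n then rcons (rcons P a) [::] else rcons P (rcons a k).
Proof.
elim: A => [|z A [P [a [EA EAk]]]] /=; first by exists [::], [::]; case: eqP.
rewrite EA EAk {EA EAk}.
case: eqP => [zn|nzn]; first by exists ([::] :: P), a; case: eqP.
case: P => [|p P] /=; first by exists [::], (z :: a); case: eqP.
by exists ((z :: p) :: P), a; case: eqP.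
Qed.

Definition symbol_range s := maxsym s - minsym s.

Lemma mem_parts_cat n A B x y : x \in parts n A ++ parts n B -> y \in x ->
  (y \in A ++ B) && (y != n).
Proof.
rewrite !mem_cat => /orP[] xp /(mem_parts xp) /andP[yAB ->]; by rewrite yAB ?orbT.
Qed.

Lemma parts_range_lt A B x y :
  x \in parts (minsym (A ++ B)) A ++ parts (minsym (A ++ B)) B ->
  y \in parts (minsym (A ++ B)) A ++ parts (minsym (A ++ B)) B ->
  x ++ y = [::] \/ symbol_range (x ++ y) < symbol_range (A ++ B).
Proof.
move=> xU yU; have [->|xy0] := eqVneq (x ++ y) [::]; [by left | right].
have sym_xy s : s \in x ++ y -> minsym (A ++ B) < s <= maxsym (A ++ B).
  rewrite mem_cat => /orP[] sxy;
    [have := mem_parts_cat xU sxy | have := mem_parts_cat yU sxy];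
    by case/andP=> sAB sn; rewrite ltn_neqAle eq_sym sn minsym_le // leq_maxsym.
have /andP[minlt _] := sym_xy _ (minsym_mem xy0).
have maxle : maxsym (x ++ y) <= maxsym (A ++ B) by apply: maxsym_le => s /sym_xy /andP[].
have := leq_maxsym (minsym_mem xy0); rewrite /symbol_range; lia.
Qed.

Lemma wle_fuelS f A B : A ++ B != [::] ->
  wle_fuel f.+1 A B <->
  lexmax_le (wle_fuel f) (parts (minsym (A ++ B)) A) (parts (minsym (A ++ B)) B).
Proof. by rewrite /=; case: (A ++ B). Qed.

Lemma wle_fuel_nil f A B : A ++ B = [::] -> wle_fuel f A B.
Proof. by case: f => //= f ->. Qed.

Lemma wle_fuel_eq f h A B :
  A ++ B = [::] \/ symbol_range (A ++ B) < minn f h ->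
  wle_fuel f A B <-> wle_fuel h A B.
Proof.
elim: f h A B => [|f IHf] h A B [AB0|]; try by split=> _; apply: wle_fuel_nil.
  by rewrite min0n ltn0.
case: h => [|h]; first by rewrite minn0 ltn0.
rewrite minnSS ltnS => rangeAB.
have [AB0|AB] := eqVneq (A ++ B) [::]; first by split=> _; apply: wle_fuel_nil.
rewrite !wle_fuelS //; apply: eq_in_lexmax_le => x y xU yU; apply: IHf.
by case: (parts_range_lt xU yU) => [|lt]; [left | right; exact: leq_trans rangeAB].
Qed.

Lemma wle_unfold A B : A ++ B != [::] ->
  wle A B <-> lexmax_le wle (parts (minsym (A ++ B)) A) (parts (minsym (A ++ B)) B).
Proof.
move=> AB; rewrite /wle wle_fuelS //; apply: eq_in_lexmax_le => x y xU yU.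
apply: wle_fuel_eq; case: (parts_range_lt xU yU) => [|lt]; [by left | right].
by rewrite leq_min lt ltnSn.
Qed.

(* A classical boolean version of ≾, so that right_maxima and filter apply. *)
Definition wleb (A B : word) : bool :=
  if excluded_middle_informative (wle A B) then true else false.

Lemma wlebP A B : reflect (wle A B) (wleb A B).
Proof. by rewrite /wleb; case: excluded_middle_informative => h; constructor. Qed.

Local Notation lexb := (lexle (fun x y : word => wleb x y)).
Local Notation top_parts m A := (right_maxima wleb (parts m A)).

Lemma lexmax_le_wleb s t : lexmax_le wle s t <-> lexmax_le (fun x y => wleb x y) s t.
Proof. by apply: eq_in_lexmax_le => x y _ _; split=> /wlebP. Qed.

Lemma wle_top_parts (D : {pred word}) m A B :
  {in D &, total wleb} -> {in D & &, transitive wleb} ->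
  {subset parts m A ++ parts m B <= D} -> {in A ++ B, forall s, m <= s} ->
  wle A B <-> lexb (top_parts m A) (top_parts m B).
Proof.
move=> tot tr partsD mAB; have [mA|nmA] := boolP (m \in A ++ B); last first.
  move: nmA; rewrite mem_cat negb_or => /andP[nmA nmB].
  rewrite !parts_id //; apply: iff_sym; apply: iff_trans (lexle_seq1 _ _ _ _) _.
  by split=> /wlebP.
have AB : A ++ B != [::] by case: (A ++ B) mA.
have Em : minsym (A ++ B) = m by apply/eqP; rewrite eqn_leq minsym_le // mAB // minsym_mem.
have AD : {subset parts m A <= D} by move=> x xp; apply: partsD; rewrite mem_cat xp.
have BD : {subset parts m B <= D} by move=> x xp; apply: partsD; rewrite mem_cat xp orbT.
by rewrite wle_unfold // Em lexmax_le_wleb (lexmax_leE tot tr AD BD).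
Qed.

Definition in_range m M : {pred word} := [pred x | all (fun s => m <= s <= M) x].

Lemma parts_in_range m M A :
  A \in in_range m M -> {subset parts m A <= in_range m.+1 M}.
Proof.
move=> /allP Arange x xp; apply/allP => s sx.
have /andP[sA sm] := mem_parts xp sx.
by have /andP[ms ->] := Arange s sA; rewrite andbT ltn_neqAle eq_sym sm.
Qed.

(* Totality and transitivity must be proved together, by induction on the range
   of symbols, since unfolding ≾ at m only uses ≾ on words with symbols > m. *)
Lemma wleb_preorder_in_range d m M : M < m + d ->
  {in in_range m M &, total wleb} /\ {in in_range m M & &, transitive wleb}.
Proof.
elim: d m => [|d IHd] m MmD.
  have nil x : x \in in_range m M -> x = [::].
    by case: x => // s x /andP[/andP[ms sM] _]; lia.
  have wleb_nil : wleb [::] [::] by apply/wlebP.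
  by split=> [x y /nil-> /nil->|y x z /nil-> /nil-> /nil->]; rewrite ?wleb_nil.
have /IHd[tot tr] : M < m.+1 + d by rewrite addSnnS.
have rangeE x y : x \in in_range m M -> y \in in_range m M ->
    wle x y <-> lexb (top_parts m x) (top_parts m y).
  move=> xr yr; apply: (wle_top_parts tot tr).
    by move=> z; rewrite mem_cat => /orP[]; apply: parts_in_range.
  move=> s; rewrite mem_cat => /orP[] sxy.
  - by move/allP: xr => /(_ s sxy) /andP[].
  - by move/allP: yr => /(_ s sxy) /andP[].
have topD x : x \in in_range m M -> {subset top_parts m x <= in_range m.+1 M}.
  by move=> xr z /mem_right_maxima; apply: parts_in_range.
split=> [x y xr yr | y x z yr xr zr /wlebP/(rangeE _ _ xr yr) xy /wlebP/(rangeE _ _ yr zr) yz].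
  case: (lexle_total tot (topD _ xr) (topD _ yr)).
  - by move/(rangeE _ _ xr yr)/wlebP ->.
  - by move/(rangeE _ _ yr xr)/wlebP ->; rewrite orbT.
apply/wlebP/(rangeE _ _ xr zr).
exact: (lexle_trans tr (topD _ xr) (topD _ yr) (topD _ zr)) xy yz.
Qed.

Lemma in_range_maxsym x s : {subset x <= s} -> x \in in_range 0 (maxsym s).
Proof. by move=> xs; apply/allP => c /xs /leq_maxsym. Qed.

Lemma wleb_total : total wleb.
Proof.
move=> x y; have [tot _] := @wleb_preorder_in_range (maxsym (x ++ y)).+1 0 _ (ltnSn _).
by apply: tot; apply: in_range_maxsym => s sxy; rewrite mem_cat sxy ?orbT.
Qed.

Lemma wleb_trans : transitive wleb.
Proof.
move=> y x z; have [_ tr] := @wleb_preorder_in_range (maxsym (x ++ y ++ z)).+1 0 _ (ltnSn _).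
by apply: tr; apply: in_range_maxsym => s sxyz; rewrite !mem_cat sxyz ?orbT.
Qed.

Lemma wleb_refl : reflexive wleb.
Proof. by move=> x; have := wleb_total x x; rewrite orbb. Qed.

Lemma wleb_total_in : {in predT &, total wleb}.
Proof. exact: in2W wleb_total. Qed.

Lemma wleb_trans_in : {in predT & &, transitive wleb}.
Proof. exact: in3W wleb_trans. Qed.

Lemma wle_top_partsE m A B : {in A ++ B, forall s, m <= s} ->
  wle A B <-> lexb (top_parts m A) (top_parts m B).
Proof. exact: wle_top_parts wleb_total_in wleb_trans_in _. Qed.

Lemma wsim_top_parts m A B : {in A ++ B, forall s, m <= s} ->
  wsim A B <-> lexeq wleb (top_parts m A) (top_parts m B).
Proof.
move=> mAB; have mBA : {in B ++ A, forall s, m <= s}.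
  by move=> s; rewrite mem_cat orbC -mem_cat; exact: mAB.
rewrite /wsim (wle_top_partsE mAB) (wle_top_partsE mBA).
split=> [[AB BA]|eqAB]; first exact: lexle_anti.
by split; apply: lexeq_lexle; last apply: lexeq_sym.
Qed.

Lemma wleb_nil A : wleb [::] A.
Proof.
elim: {A}(size A).+1 {-2}A (ltnSn (size A)) => // n IHn A sizeA.
have [->|A0] := eqVneq A [::]; first exact: wleb_refl.
set m := minsym A.
apply/wlebP/(wle_top_partsE (m := m)) => [s|]; first exact: minsym_le.
have [P [a [EA _]]] := parts_rcons m A 0.
have [h [t Eht]] : exists (h : word) t, top_parts m A = h :: t.
  by rewrite EA right_maxima_rcons; case: filter => [|h t]; do 2!eexists.
have hp : h \in parts m A by apply: (@mem_right_maxima _ wleb); rewrite Eht mem_head.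
have countA : 0 < count_mem m A by rewrite -has_count has_pred1 minsym_mem.
rewrite Eht; apply/(lexle_seq1 _ _ _ t); apply: IHn.
by have := size_parts hp; lia.
Qed.

Lemma wleb_rcons A k : wleb A (rcons A k).
Proof.
elim: {A}(size A).+1 {-2}A (ltnSn (size A)) => // n IHn A sizeA.
set m := minsym (A ++ rcons A k).
apply/wlebP/(wle_top_partsE (m := m)) => [s|]; first exact: minsym_le.
have [P [a [EA EAk]]] := parts_rcons m A k.
rewrite EAk; case: eqP => [km|/eqP nkm].
  rewrite -EA right_maxima_rcons_bot -?cats1; last exact: wleb_nil.
  exact: (lexle_catr wleb_total_in _ (fun x _ => isT)).
have mA : m \in A.
  have AAk : A ++ rcons A k != [::] by case: (A).
  by have := minsym_mem AAk; rewrite -/m mem_cat mem_rcons inE eq_sym (negbTE nkm) orbb.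
have ap : a \in parts m A by rewrite EA mem_rcons mem_head.
have countA : 0 < count_mem m A by rewrite -has_count has_pred1.
rewrite EA !right_maxima_rcons.
apply: (lexle_rcons_filter wleb_total_in wleb_trans_in (fun x _ => isT) isT isT).
by apply: IHn; have := size_parts ap; lia.
Qed.

Lemma wsim_rcons_size n k A B :
  size A + size B < n -> wsim A B -> wsim (rcons A k) (rcons B k).
Proof.
elim: n A B => // n IHn A B sizeAB.
set m := minsym (rcons A k ++ rcons B k).
have mAkBk : {in rcons A k ++ rcons B k, forall s, m <= s} by move=> s; exact: minsym_le.
have mAB : {in A ++ B, forall s, m <= s}.
  by move=> s sAB; apply: mAkBk; move: sAB; rewrite !mem_cat !mem_rcons !inE => /orP[] ->; rewrite ?orbT.
rewrite (wsim_top_parts mAB) (wsim_top_parts mAkBk).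
have [PA [a [EA EAk]]] := parts_rcons m A k.
have [PB [b [EB EBk]]] := parts_rcons m B k.
rewrite EAk EBk EA EB; case: eqP => [km|/eqP nkm].
  by rewrite !(right_maxima_rcons_bot _ wleb_nil) lexeq_rcons wleb_refl => ->.
have mAB' : (m \in A) || (m \in B).
  have AkBk : rcons A k ++ rcons B k != [::] by case: (A).
  by have := minsym_mem AkBk; rewrite -/m mem_cat !mem_rcons !inE eq_sym (negbTE nkm).
have ap : a \in parts m A by rewrite EA mem_rcons mem_head.
have bp : b \in parts m B by rewrite EB mem_rcons mem_head.
have countAB : 0 < count_mem m A + count_mem m B.
  by rewrite -count_cat -has_count has_pred1 mem_cat.
have sizeab : size a + size b < n by have := size_parts ap; have := size_parts bp; lia.
move=> eqAB; have /andP[ab ba] : wleb a b && wleb b a.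
  by move: eqAB; rewrite !right_maxima_rcons lexeq_rcons => /andP[].
have [/wlebP akbk /wlebP bkak] : wsim (rcons a k) (rcons b k).
  by apply: IHn sizeab _; split; apply/wlebP.
exact: (lexeq_right_maxima_rcons wleb_trans (wleb_rcons a k) (wleb_rcons b k) akbk bkak eqAB).
Qed.

Theorem lemma3 (k : nat) (A B : word) :
  wsim A B -> wsim (rcons A k) (rcons B k).
Proof. exact: wsim_rcons_size (ltnSn _). Qed.
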